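(* For $n\ge3$: $\mathrm{St}(\mathfrak a_0^\circ(n))=\{I,X\}^{\otimes n}\cup\{Y,Z\}^{\otimes n}$; $\mathrm{St}(\mathfrak a_2^\circ(n))=\{P_I,P_{XY},P_{YX},P_Z\}$ for $n$ even and $\{P_I,P_Z\}$ for $n$ odd; $\mathrm{St}(\mathfrak a_3^\circ(n))=\mathrm{St}(\mathfrak a_6^\circ(n))=\{P_I,P_X,P_{YZ},P_{ZY}\}$ for $n$ even and $\{P_I,P_X\}$ for $n$ odd; $\mathrm{St}(\mathfrak a_4^\circ(n))=\mathrm{St}(\mathfrak a_7^\circ(n))=\{P_I,P_X,P_Y,P_Z\}$; $\mathrm{St}(\mathfrak a_5^\circ(n))=\mathrm{St}(\mathfrak a_{10}^\circ(n))=\{P_I,P_{XYZ},P_{YZX},P_{ZXY}\}$ if $n\equiv0\pmod3$ and $\{P_I\}$ if $n\equiv\pm1\pmod 3$; $\mathrm{St}(\mathfrak a_8^\circ(n))=\{P_I,P_Y\}$; $\mathrm{St}(\mathfrak a_{13}^\circ(n))=\mathrm{St}(\mathfrak a_{20}^\circ(n))=\{P_I,P_X\}$; $\mathrm{St}(\mathfrak a_{14}^\circ(n))=\{P_I,P_Z\}$; $\mathrm{St}(\mathfrak b_0^\circ(n))=\mathrm{St}(\mathfrak b_1^\circ(n))=\{I,X\}^{\otimes n}$; $\mathrm{St}(\mathfrak a_k^\circ(n))=\mathrm{St}(\mathfrak b_l^\circ(n))=\{P_I\}$ for $k\in\{9,11,12,15,16,17,18,19,21,22\}$ and $l\in\{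2,3,4\}$.
   Context: Pauli matrices $I,X,Y,Z$; $\mathcal P_n$ is the set of length-$n$ Pauli strings. $A_iB_j$ denotes the string with $A$ at position $i$, $B$ at $j$, $I$ elsewhere. For a word $w$ over $\{I,X,Y,Z\}$, $P_w\in\mathcal P_n$ is the repetition $www\cdots$ truncated to length $n$ (e.g. $P_I=I^{\otimes n}$, $P_X=X^{\otimes n}$, $P_{XYZ}=XYZXYZ\cdots$). The stabilizer $\mathrm{St}(\mathfrak s)$ is the set of all $P\in\mathcal P_n$ commuting with every element of $\mathfrak s$. For a set $S$ of Pauli strings, $\mathrm{Lie}\langle S\rangle$ is the smallest real Lie subalgebra of $\mathfrak u(2^n)$ containing $\{iP:P\in S\}$. For a set $G$ of two-qubit strings, $G^\circ(n)=\mathrm{Lie}\langle A_jB_{j+1}\ (1\le j\le n-1),\ A_nB_1: AB\in G\rangle$. Generating sets: $\mathfrak a_0=\{XX\}$, $\mathfrak a_2=\{XY,YX\}$, $\mathfrak a_3=\{XX,YZ\}$, $\mathfrak a_4=\{XX,YY\}$, $\mathfrak a_5=\{XY,YZ\}$, $\mathfrak a_6=\{XX,YZ,ZY\}$, $\mathfrak a_7=\{XX,YY,ZZ\}$, $\mathfrak a_8=\{XX,XZ\}$, $\mathfrak a_9=\{XY,XZ\}$, $\mathfrak a_{10}=\{XY,YZ,ZX\}$, $\mathfrak a_{11}=\{XY,YX,YZ\}$, $\mathfrak a_{12}=\{XX,XY,YZ\}$, $\mathfrak a_{13}=\{XX,YY,YZ\}$, $\mathfrak a_{14}=\{XX,YY,XY\}$,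 $\mathfrak a_{15}=\{XX,XY,XZ\}$, $\mathfrak a_{16}=\{XY,YX,YZ,ZY\}$, $\mathfrak a_{17}=\{XX,XY,ZX\}$, $\mathfrak a_{18}=\{XX,XZ,YY,ZY\}$, $\mathfrak a_{19}=\{XX,XY,ZX,YZ\}$, $\mathfrak a_{20}=\{XX,YY,ZZ,ZY\}$, $\mathfrak a_{21}=\{XX,YY,XY,ZX\}$, $\mathfrak a_{22}=\{XX,XY,XZ,YX\}$, $\mathfrak b_0=\{XI,IX\}$, $\mathfrak b_1=\{XX,XI,IX\}$, $\mathfrak b_2=\{XY,XI,IX\}$, $\mathfrak b_3=\{XI,YI,IX,IY\}$, $\mathfrak b_4=\{XX,XY,XI,IX\}$. *)

From HB Require Import structures.
From mathcomp Require Import all_boot all_order all_algebra all_field.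
Set Implicit Arguments. Unset Strict Implicit. Unset Printing Implicit Defensive.
Import Order.TTheory GRing.Theory Num.Theory.
Local Open Scope ring_scope.

Inductive pauli := pI | pX | pY | pZ.

Definition pauli_eqb (a b : pauli) : bool :=
  match a, b with
  | pI, pI | pX, pX | pY, pY | pZ, pZ => true | _, _ => false end.
Lemma pauli_eqP : Equality.axiom pauli_eqb.
Proof. by move=> [] []; constructor. Qed.
HB.instance Definition _ := hasDecEq.Build pauli pauli_eqP.

(* 2x2 Pauli matrix entries in the computational basis (false = |0>, true = |1>) *)
Definition pentry (p : pauli) (a b : bool) : algC :=
  match p with
  | pI => if a == b then 1 else 0
  | pX => if a != b then 1 else 0
  | pY => if a == b then 0 else if a then 'i else - 'i
  | pZ => if a == b then (if a then -1 else 1) else 0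
  end.

Definition pstring (n : nat) := {ffun 'I_n -> pauli}.

(* the 2^n x 2^n matrix of a Pauli string (tensor product; qubit k = bit k of the index) *)
Definition pmat {n : nat} (P : pstring n) : 'M[algC]_(2 ^ n) :=
  \matrix_(i, j) \prod_(k < n) pentry (P k) (odd (i %/ 2 ^ k)) (odd (j %/ 2 ^ k)).

(* Lie<S>: smallest real Lie subalgebra containing {iP : P in S} *)
Definition lie_gen (n : nat) (S : pstring n -> Prop) (M : 'M[algC]_(2 ^ n)) : Prop :=
  forall L : 'M[algC]_(2 ^ n) -> Prop,
    (forall P, S P -> L ('i *: pmat P)) ->
    (forall A B, L A -> L B -> L (A + B)) ->
    (forall (r : algC) A, r \is Num.real -> L A -> L (r *: A)) ->
    (forall A B, L A -> L B -> L (A *m B - B *m A)) ->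
    L M.

Definition St (n : nat) (s : 'M[algC]_(2 ^ n) -> Prop) (P : pstring n) : Prop :=
  forall M, s M -> pmat P *m M = M *m pmat P.

Definition two_site (n : nat) (A B : pauli) (i j : 'I_n) : pstring n :=
  [ffun k => if k == i then A else if k == j then B else pI].

(* G°(n): generated by A_j B_{j+1} (cyclically, ordS j = j+1 mod n), AB in G *)
Definition cyc_gens (G : seq (pauli * pauli)) (n : nat) (P : pstring n) : Prop :=
  exists A B (j : 'I_n), (A, B) \in G /\ P = two_site A B j (ordS j).
Definition circ (G : seq (pauli * pauli)) (n : nat) : 'M[algC]_(2 ^ n) -> Prop :=
  @lie_gen n (@cyc_gens G n).
Arguments circ G n M : clear implicits.

(* P_w : repetition of word w truncated to length n *)
Definition Pw (n : nat) (w : seq pauli) : pstring n :=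
  [ffun k : 'I_n => nth pI w (k %% size w)].

Definition tens2 (n : nat) (A B : pauli) (P : pstring n) : Prop :=
  forall k, P k = A \/ P k = B.

Definition seteq (n : nat) (S T : pstring n -> Prop) : Prop := forall P, S P <-> T P.

Definition in_list (n : nat) (l : seq (pstring n)) (P : pstring n) : Prop := P \in l.

Definition a0  := [:: (pX,pX)].
Definition a2  := [:: (pX,pY); (pY,pX)].
Definition a3  := [:: (pX,pX); (pY,pZ)].
Definition a4  := [:: (pX,pX); (pY,pY)].
Definition a5  := [:: (pX,pY); (pY,pZ)].
Definition a6  := [:: (pX,pX); (pY,pZ); (pZ,pY)].
Definition a7  := [:: (pX,pX); (pY,pY); (pZ,pZ)].
Definition a8  := [:: (pX,pX); (pX,pZ)].
Definition a9  := [:: (pX,pY); (pX,pZ)].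
Definition a10 := [:: (pX,pY); (pY,pZ); (pZ,pX)].
Definition a11 := [:: (pX,pY); (pY,pX); (pY,pZ)].
Definition a12 := [:: (pX,pX); (pX,pY); (pY,pZ)].
Definition a13 := [:: (pX,pX); (pY,pY); (pY,pZ)].
Definition a14 := [:: (pX,pX); (pY,pY); (pX,pY)].
Definition a15 := [:: (pX,pX); (pX,pY); (pX,pZ)].
Definition a16 := [:: (pX,pY); (pY,pX); (pY,pZ); (pZ,pY)].
Definition a17 := [:: (pX,pX); (pX,pY); (pZ,pX)].
Definition a18 := [:: (pX,pX); (pX,pZ); (pY,pY); (pZ,pY)].
Definition a19 := [:: (pX,pX); (pX,pY); (pZ,pX); (pY,pZ)].
Definition a20 := [:: (pX,pX); (pY,pY); (pZ,pZ); (pZ,pY)].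
Definition a21 := [:: (pX,pX); (pY,pY); (pX,pY); (pZ,pX)].
Definition a22 := [:: (pX,pX); (pX,pY); (pX,pZ); (pY,pX)].
Definition b0  := [:: (pX,pI); (pI,pX)].
Definition b1  := [:: (pX,pX); (pX,pI); (pI,pX)].
Definition b2  := [:: (pX,pY); (pX,pI); (pI,pX)].
Definition b3  := [:: (pX,pI); (pY,pI); (pI,pX); (pI,pY)].
Definition b4  := [:: (pX,pX); (pX,pY); (pX,pI); (pI,pX)].

From mathcomp Require Import all_boot all_order all_algebra all_field.
Set Implicit Arguments. Unset Strict Implicit. Unset Printing Implicit Defensive.
Import Order.TTheory GRing.Theory Num.Theory.
Local Open Scope ring_scope.

(* Two Pauli strings commute iff they anticommute at an even number of sites, so the
   stabilizer of a Lie algebra generated by Pauli strings is the commutant of the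
   generators. Hence P commutes with every A_j B_(j+1), AB in G, iff each cyclically
   adjacent pair (P_j, P_(j+1)) satisfies the local relation "P_j anticommutes with A
   iff P_(j+1) anticommutes with B, for all AB in G". Except for a0, b0 and b1 this
   relation is the graph of a partial map f on {I, X, Y, Z}, so the stabilizer consists
   of the periodic orbits of f of length n. As f^9 = f^3, these orbits only depend on
   n mod 6 once n >= 3, and the finitely many cases are settled by computation. *)

Definition anticomm (p q : pauli) : bool := [&& p != pI, q != pI & p != q].

(* Row [false] of the Pauli matrix of [p] has its nonzero entry in column [pflip p]. *)
Definition pflip (p : pauli) : bool := (p == pX) || (p == pY).

Lemma pentry_mulC p q a c :
  \sum_(b : bool) pentry p a b * pentry q b c =
  (-1) ^+ anticomm p q * \sum_(b : bool) pentry q a b * pentry p b c.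
Proof.
rewrite !big_bool; case: p; case: q; case: a; case: c => /=;
  by rewrite ?(mul0r, mulr0, mul1r, mulr1, add0r, addr0, expr1, mulN1r,
               mulNr, mulrN, opprK, mulCii, opprD, oppr0).
Qed.

Lemma pentry_mul_neq0 p q :
  \sum_(b : bool) pentry p false b * pentry q b (pflip p (+) pflip q) != 0.
Proof.
rewrite !big_bool; case: p; case: q => /=;
  by rewrite ?(mul0r, mulr0, mul1r, mulr1, add0r, addr0, mulNr, mulrN, opprK,
               mulCii, oppr_eq0, oner_eq0, neq0Ci).
Qed.

Local Open Scope nat_scope.

Definition bits n (i : 'I_(2 ^ n)) : {ffun 'I_n -> bool} :=
  [ffun k : 'I_n => odd (i %/ 2 ^ k)].

Lemma eq_bits n l l' : l < 2 ^ n -> l' < 2 ^ n ->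
  (forall k, k < n -> odd (l %/ 2 ^ k) = odd (l' %/ 2 ^ k)) -> l = l'.
Proof.
elim: n l l' => [|n IHn] l l'; first by rewrite !ltnS !leqn0 => /eqP-> /eqP->.
move=> lt_l lt_l' same_bits.
have lt_half m : m < 2 ^ n.+1 -> m./2 < 2 ^ n by rewrite -divn2 ltn_divLR // -expnSr.
rewrite -[l]odd_double_half -[l']odd_double_half.
have := same_bits 0 isT; rewrite expn0 !divn1 => ->.
congr (_ + _.*2); apply: IHn (lt_half _ lt_l) (lt_half _ lt_l') _ => k lt_k.
by have := same_bits k.+1 lt_k; rewrite expnS !divnMA !divn2.
Qed.

Lemma bits_inj n : injective (@bits n).
Proof.
move=> i j /ffunP eq_ij; apply/val_inj/(eq_bits (ltn_ord i) (ltn_ord j)) => k lt_k.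
by have := eq_ij (Ordinal lt_k); rewrite !ffunE.
Qed.

Lemma bits_bij n : bijective (@bits n).
Proof.
by apply: inj_card_bij (@bits_inj n) _; rewrite card_ffun card_bool !card_ord.
Qed.

Local Close Scope nat_scope.

Lemma pmat_mul_entry n (P Q : pstring n) i j :
  (pmat P *m pmat Q) i j =
  \prod_(k < n) \sum_(b : bool) pentry (P k) (bits i k) b * pentry (Q k) b (bits j k).
Proof.
rewrite bigA_distr_bigA /= mxE (reindex _ (onW_bij _ (bits_bij n))) /=.
apply: eq_bigr => l _; rewrite !mxE -big_split /=.
by apply: eq_bigr => k _; rewrite !ffunE.
Qed.

Lemma pmat_mulC n (P Q : pstring n) :
  pmat P *m pmat Q = (-1) ^+ (\sum_(k < n) anticomm (P k) (Q k))%N *: (pmat Q *m pmat P).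
Proof.
apply/matrixP => i j; rewrite pmat_mul_entry [RHS]mxE pmat_mul_entry.
under eq_bigr do rewrite pentry_mulC.
by rewrite big_split /= prodrXr.
Qed.

Lemma pmat_mul_neq0 n (P Q : pstring n) : pmat P *m pmat Q != 0.
Proof.
have [idx bitsK idxK] := bits_bij n.
apply/eqP => /matrixP/(_ (idx [ffun => false]) (idx [ffun k => pflip (P k) (+) pflip (Q k)])).
rewrite pmat_mul_entry !idxK mxE; apply/eqP/prodf_neq0 => k _.
by rewrite !ffunE pentry_mul_neq0.
Qed.

Lemma pmat_commuteE n (P Q : pstring n) :
  (pmat P *m pmat Q == pmat Q *m pmat P) = ~~ odd (\sum_(k < n) anticomm (P k) (Q k)).
Proof.
rewrite pmat_mulC -signr_odd; case: odd; last by rewrite expr0 scale1r eqxx.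
rewrite expr1 scaleN1r; apply/eqP=> anti_eq.
have : 2%:R *: (pmat Q *m pmat P) = 0 :> 'M[algC]_(2 ^ n).
  by rewrite scaler_nat mulr2n -{1}anti_eq addNr.
by move/eqP; rewrite scaler_eq0 pnatr_eq0 (negbTE (pmat_mul_neq0 Q P)).
Qed.

Lemma St_lie_gen n (S : pstring n -> Prop) (P : pstring n) :
  St (lie_gen S) P <-> forall Q, S Q -> pmat P *m pmat Q = pmat Q *m pmat P.
Proof.
split=> [St_P Q SQ | commP M].
  have /St_P : lie_gen S ('i *: pmat Q) by move=> L L_S *; apply: L_S.
  by rewrite -scalemxAr -scalemxAl => /(scalerI (neq0Ci _)).
move=> /(_ (fun M => pmat P *m M = M *m pmat P)); apply.
- by move=> Q SQ; rewrite -scalemxAr -scalemxAl commP.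
- by move=> A B cA cB; rewrite mulmxDr mulmxDl cA cB.
- by move=> r A _ cA; rewrite -scalemxAr -scalemxAl cA.
move=> A B cA cB; have cM C D : pmat P *m C = C *m pmat P -> pmat P *m D = D *m pmat P ->
    pmat P *m (C *m D) = C *m D *m pmat P.
  by move=> cC cD; rewrite mulmxA cC -mulmxA cD mulmxA.
by rewrite mulmxBr mulmxBl !cM.
Qed.

Local Open Scope nat_scope.

Lemma anticomm_two_site n (P : pstring n) A B (i j : 'I_n) : i != j ->
  \sum_(k < n) anticomm (P k) (two_site A B i j k) = anticomm (P i) A + anticomm (P j) B.
Proof.
move=> neq_ij; rewrite (bigD1 i) // (bigD1 j) 1?eq_sym //= big1 ?addn0.
  by rewrite !ffunE eqxx eq_sym (negbTE neq_ij) eqxx.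
by move=> k /andP[ne_kj ne_ki]; rewrite ffunE (negbTE ne_ki) (negbTE ne_kj); case: (P k).
Qed.

Lemma ordS_neq n (j : 'I_n) : 1 < n -> j != ordS j.
Proof.
move=> lt1n; rewrite -val_eqE /=; case: (ltnP j.+1 n) => [lt_jn | le_nj].
  by rewrite modn_small // (ltn_eqF (ltnSn j)).
have eq_jn : j.+1 = n by apply/eqP; rewrite eqn_leq ltn_ord.
by rewrite eq_jn modnn -lt0n -ltnS eq_jn.
Qed.

Definition compat (G : seq (pauli * pauli)) (a b : pauli) : bool :=
  all (fun AB => anticomm a AB.1 == anticomm b AB.2) G.

Lemma St_circP n G (P : pstring n) : 1 < n ->
  St (circ G n) P <-> forall j : 'I_n, compat G (P j) (P (ordS j)).
Proof.
move=> lt1n.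
have commE A B j : (pmat P *m pmat (two_site A B j (ordS j)) ==
                    pmat (two_site A B j (ordS j)) *m pmat P) =
                   (anticomm (P j) A == anticomm (P (ordS j)) B).
  by rewrite pmat_commuteE anticomm_two_site ?ordS_neq // oddD !oddb negb_add.
split=> [/St_lie_gen commP j | compatP]; last apply/St_lie_gen => Q [A [B [j [GAB ->]]]].
  by apply/allP=> -[A B] GAB; rewrite -commE; apply/eqP/commP; exists A, B, j.
by apply/eqP; rewrite commE; apply: (allP (compatP j) (A, B)).
Qed.

Section Iteration.
Variables (T : Type) (f : T -> T).

Lemma iter_modn n x k : iter n f x = x -> iter k f x = iter (k %% n) f x.
Proof.
move=> fix_x; rewrite {1}(divn_eq k n) addnC iterD; congr (iter _ f _).
by elim: (k %/ n) => // q IHq; rewrite mulSn iterD IHq fix_x.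
Qed.

Lemma iter_eventually_periodic m p :
  (forall x, iter (p + m) f x = iter m f x) ->
  forall k x, m <= k -> iter k f x = iter ((k - m) %% p + m) f x.
Proof.
move=> per k x le_mk; rewrite -{1}(subnK le_mk) {1}(divn_eq (k - m) p).
rewrite -addnA addnCA iterD [in RHS]iterD; congr (iter _ f _).
by elim: (_ %/ p) => // q IHq; rewrite mulSnr -addnA iterD per -iterD.
Qed.

Lemma iter_periodic_point m p k x :
  (forall y, iter (p + m) f y = iter m f y) -> 0 < k -> iter k f x = x -> iter p f x = x.
Proof.
move=> per k_gt0 fix_x.
have fix_mk : iter (m * k) f x = x.
  by rewrite iterM; elim: m {per} => //= m ->.
rewrite -fix_mk -(subnKC (leq_pmulr m k_gt0)) !iterD -[iter p f _]iterD per.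
by rewrite -iterD subnKC ?leq_pmulr.
Qed.

Lemma cyclic_orbitP n (P : {ffun 'I_n -> T}) (n_gt0 : 0 < n) :
  (forall j, P (ordS j) = f (P j)) <->
  exists2 x, iter n f x = x & P = [ffun k : 'I_n => iter k f x].
Proof.
split=> [succP | [x fix_x ->] j]; last first.
  by rewrite !ffunE /= -(iter_modn (j.+1) fix_x).
pose x := P (Ordinal n_gt0).
have orbitP k (lt_kn : k < n) : P (Ordinal lt_kn) = iter k f x.
  elim: k lt_kn => [|k IHk] lt_kn; first exact/congr1/val_inj.
  have lt_k : k < n := ltnW lt_kn.
  rewrite iterS -(IHk lt_k) -succP; by apply/congr1/val_inj; rewrite /= modn_small.
exists x; last by apply/ffunP => k; rewrite ffunE -orbitP; apply/congr1/val_inj.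
have lt_pred : n.-1 < n by rewrite prednK.
rewrite -(prednK n_gt0) iterS -(orbitP _ lt_pred) -succP; apply/congr1/val_inj.
by rewrite /= prednK // modnn.
Qed.

End Iteration.

Definition paulis := [:: pI; pX; pY; pZ].

Lemma mem_paulis p : p \in paulis. Proof. by case: p. Qed.

Section Transfer.
Variable G : seq (pauli * pauli).

(* When [compat G] is the graph of a partial function, [transfer] is that function
   and [transfer_defined] its domain. *)
Definition transfer (a : pauli) : pauli := nth pI [seq b <- paulis | compat G a b] 0.
Definition transfer_defined (a : pauli) : bool := has (compat G a) paulis.

Definition compat_functional : bool :=
  all (fun a => all (fun b => compat G a b == (b == transfer a) && transfer_defined a)
                    paulis) paulis.

Lemma St_circ_orbitP n (P : pstring n) : 1 < n -> compat_functional ->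
  St (circ G n) P <->
  exists2 x, iter n transfer x = x /\ (forall k, transfer_defined (iter k transfer x))
           & P = [ffun k : 'I_n => iter k transfer x].
Proof.
move=> lt1n /allP functional.
have compatE a b : compat G a b = (b == transfer a) && transfer_defined a.
  by apply/eqP; move/allP: (functional a (mem_paulis a)); apply; apply: mem_paulis.
have n_gt0 : 0 < n by apply: ltnW.
apply: iff_trans (St_circP G P lt1n) _.
split=> [compatP | [x [fix_x defx] P_orbit] j].
  have succP j : P (ordS j) = transfer (P j).
    by have := compatP j; rewrite compatE => /andP[/eqP].
  have [x fix_x P_orbit] := (cyclic_orbitP _ P n_gt0).1 succP.
  exists x => //; split=> // k; rewrite (iter_modn _ fix_x).
  by have := compatP (Ordinal (ltn_pmod k n_gt0)); rewrite compatE P_orbit !ffunE => /andP[_].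
have succP := (cyclic_orbitP _ P n_gt0).2 (ex_intro2 _ _ x fix_x P_orbit).
by rewrite compatE succP eqxx P_orbit ffunE defx.
Qed.

End Transfer.

Definition word6 (w : seq pauli) : seq pauli := mkseq (fun s => nth pI w (s %% size w)) 6.

Lemma Pw_word6 n w : size w %| 6 -> Pw n (word6 w) = Pw n w.
Proof.
by move=> dvd_w6; apply/ffunP=> k; rewrite !ffunE size_mkseq nth_mkseq ?ltn_pmod ?modn_dvdm.
Qed.

Lemma Pw_traject n (f : pauli -> pauli) x :
  iter 6 f x = x -> Pw n (traject f x 6) = [ffun k : 'I_n => iter k f x].
Proof.
move=> fix_x; apply/ffunP=> k; rewrite !ffunE size_traject (iter_modn _ fix_x).
by rewrite (set_nth_default x) ?size_traject ?ltn_pmod ?nth_traject ?ltn_pmod.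
Qed.

Section Words.
Variable G : seq (pauli * pauli).
Local Notation f := (transfer G).

Definition periodic_orbit (r : nat) (x : pauli) : bool :=
  (iter (r + 3) f x == x) && all (transfer_defined G) (traject f x 6).

Section EventuallyPeriodic.
Hypothesis iter9 : forall x, iter (6 + 3) f x = iter 3 f x.

Lemma periodic_orbit_iter6 r x : periodic_orbit r x -> iter 6 f x = x.
Proof.
by case/andP=> /eqP fix_x _; apply: iter_periodic_point iter9 (ltn_addl r (isT : 0 < 3)) fix_x.
Qed.

Lemma periodic_orbitP n x : 3 <= n ->
  (iter n f x = x /\ forall k, transfer_defined G (iter k f x)) <->
  periodic_orbit ((n - 3) %% 6) x.
Proof.
move=> le3n; have iter_n := iter_eventually_periodic iter9 x le3n.
split=> [[fix_x defx] | orbit_x].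
  by rewrite /periodic_orbit -iter_n fix_x eqxx; apply/allP=> y /trajectP[k _ ->].
have fix6 := periodic_orbit_iter6 orbit_x.
move: orbit_x; rewrite /periodic_orbit -iter_n => /andP[/eqP fix_x /all_nthP def6].
split=> // k.
rewrite (iter_modn _ fix6) -(nth_traject f (ltn_pmod k (isT : 0 < 6))).
by apply: def6; rewrite size_traject ltn_pmod.
Qed.

End EventuallyPeriodic.

(* A certificate that [St (circ G n)] is the set of the [Pw n w], [w \in ws],
   for every [n >= 3] with [(n - 3) %% 6 = r]. *)
Definition stabilizer_words (ws : seq (seq pauli)) (r : nat) : bool :=
  [&& compat_functional G,
      all (fun x => iter 9 f x == iter 3 f x) paulis,
      all (fun w => [&& size w %| 6, periodic_orbit r (head pI w)
                      & word6 w == traject f (head pI w) 6]) ws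
    & all (fun x => periodic_orbit r x ==> (traject f x 6 \in map word6 ws)) paulis].

Lemma St_circ_words n ws : 3 <= n -> stabilizer_words ws ((n - 3) %% 6) ->
  seteq (St (circ G n)) (in_list (map (Pw n) ws)).
Proof.
move=> le3n /and4P[functional /allP per9 /allP words_ok /allP complete].
have iter9 x : iter (6 + 3) f x = iter 3 f x by apply/eqP/per9/mem_paulis.
have StP P : St (circ G n) P <->
    exists2 x, periodic_orbit ((n - 3) %% 6) x & P = Pw n (traject f x 6).
  apply: iff_trans (St_circ_orbitP P (leq_trans _ le3n) functional) _ => //.
  split=> [[x orbit_x ->] | [x orbit_x ->]]; exists x.
  - exact/(periodic_orbitP iter9 x le3n).
  - have /(periodic_orbit_iter6 iter9) fix6 := (periodic_orbitP iter9 x le3n).1 orbit_x.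
    by rewrite Pw_traject.
  - exact/(periodic_orbitP iter9 x le3n).
  - by rewrite Pw_traject // (periodic_orbit_iter6 iter9 orbit_x).
move=> P; apply: iff_trans (StP P) _; rewrite /in_list.
split=> [[x orbit_x ->] | /mapP[w w_ws ->]].
  have := complete x (mem_paulis x); rewrite orbit_x => /mapP[w w_ws eq_w].
  have /and3P[dvd_w6 _ _] := words_ok w w_ws.
  by apply/mapP; exists w; rewrite // eq_w Pw_word6.
have /and3P[dvd_w6 orbit_w /eqP eq_w] := words_ok w w_ws.
by exists (head pI w); rewrite // -eq_w Pw_word6.
Qed.

End Words.

Lemma cyclic_constant (T : Type) n (Q : {ffun 'I_n -> T}) : 0 < n ->
  (forall j, Q (ordS j) = Q j) -> exists x, forall j, Q j = x.
Proof.
move=> n_gt0 /(cyclic_orbitP id Q n_gt0)[x _ ->]; exists x => j.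
by rewrite ffunE; elim: (nat_of_ord j) => //= k ->.
Qed.

Lemma St_circ_a0 n (P : pstring n) : 1 < n ->
  St (circ a0 n) P <-> tens2 pI pX P \/ tens2 pY pZ P.
Proof.
move=> lt1n; apply: iff_trans (St_circP a0 P lt1n) _; rewrite /compat /=.
split=> [compatP | tensP j]; last first.
  by case: tensP => tensP; case: (tensP j) => ->; case: (tensP (ordS j)) => ->.
have constP j : [ffun k => anticomm (P k) pX] (ordS j) = [ffun k => anticomm (P k) pX] j.
  by rewrite !ffunE; have := compatP j; rewrite ?andbT => /eqP ->.
have [[] const_b] := cyclic_constant (ltnW lt1n) constP; [right | left] => k;
  by move: (const_b k); rewrite ffunE; case: (P k) => // _; [left | right].
Qed.

Lemma St_circ_tens2_IX G n (P : pstring n) : 1 < n ->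
  (forall a b, compat G a b = ~~ anticomm a pX && ~~ anticomm b pX) ->
  St (circ G n) P <-> tens2 pI pX P.
Proof.
move=> lt1n compatE; apply: iff_trans (St_circP G P lt1n) _.
split=> [compatP k | tensP j]; last rewrite compatE.
  by have := compatP k; rewrite compatE => /andP[]; case: (P k) => //= _ _; [left | right].
by case: (tensP j) => ->; case: (tensP (ordS j)) => ->.
Qed.

Ltac words_of_Pw l :=
  lazymatch l with
  | nil => constr:(@nil (seq pauli))
  | cons (Pw _ ?w) ?t => let t' := words_of_Pw t in constr:(cons w t')
  end.

(* [words] is [St_circ_words] at [n]; [oddE] and [mod3E] rewrite [odd n] and [n %% 3]
   in terms of [(n - 3) %% 6], which the caller has made a numeral. *)
Ltac certify words oddE mod3E :=
  lazymatch goal with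
  | |- _ /\ _ => split; certify words oddE mod3E
  | |- [/\ _, _ & _] => split; certify words oddE mod3E
  | |- [/\ _, _, _ & _] => split; certify words oddE mod3E
  | |- [/\ _, _, _, _ & _] => split; certify words oddE mod3E
  | |- seteq _ (in_list ?l) => let ws := words_of_Pw l in apply: (words _ ws); by vm_compute
  | |- seteq _ _ => assumption
  | |- forall G, _ -> _ =>
      let G := fresh "G" in let G_in := fresh "G_in" in
      move=> G G_in; apply: (words G [:: [:: pI]]); move: G G_in; apply/allP; by vm_compute
  | |- _ -> _ =>
      let h := fresh "h" in
      move=> h; first [by move: h; rewrite ?oddE ?mod3E | certify words oddE mod3E]
  end.

Theorem mainTheorem9 (n : nat) (hn : 3 <= n) :
  let St' G := @St n (circ G n) in
  let L := @in_list n in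
  let P := Pw n in
  [/\ seteq (St' a0) (fun Q => tens2 pI pX Q \/ tens2 pY pZ Q),
      (~~ odd n -> seteq (St' a2) (L [:: P [:: pI]; P [:: pX; pY]; P [:: pY; pX]; P [:: pZ]]))
      /\ (odd n -> seteq (St' a2) (L [:: P [:: pI]; P [:: pZ]])),
      (~~ odd n ->
         seteq (St' a3) (L [:: P [:: pI]; P [:: pX]; P [:: pY; pZ]; P [:: pZ; pY]]) /\
         seteq (St' a6) (L [:: P [:: pI]; P [:: pX]; P [:: pY; pZ]; P [:: pZ; pY]]))
      /\ (odd n -> seteq (St' a3) (L [:: P [:: pI]; P [:: pX]]) /\
                   seteq (St' a6) (L [:: P [:: pI]; P [:: pX]])),
      seteq (St' a4) (L [:: P [:: pI]; P [:: pX]; P [:: pY]; P [:: pZ]]) /\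
      seteq (St' a7) (L [:: P [:: pI]; P [:: pX]; P [:: pY]; P [:: pZ]]) &
    [/\ (n %% 3 = 0 ->
         seteq (St' a5) (L [:: P [:: pI]; P [:: pX; pY; pZ]; P [:: pY; pZ; pX]; P [:: pZ; pX; pY]]) /\
         seteq (St' a10) (L [:: P [:: pI]; P [:: pX; pY; pZ]; P [:: pY; pZ; pX]; P [:: pZ; pX; pY]]))
      /\ (n %% 3 <> 0 -> seteq (St' a5) (L [:: P [:: pI]]) /\ seteq (St' a10) (L [:: P [:: pI]])),
      seteq (St' a8) (L [:: P [:: pI]; P [:: pY]]),
      seteq (St' a13) (L [:: P [:: pI]; P [:: pX]]) /\ seteq (St' a20) (L [:: P [:: pI]; P [:: pX]]),
      seteq (St' a14) (L [:: P [:: pI]; P [:: pZ]]) &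
    [/\ seteq (St' b0) (tens2 pI pX) /\ seteq (St' b1) (tens2 pI pX) &
      (forall G, G \in [:: a9; a11; a12; a15; a16; a17; a18; a19; a21; a22; b2; b3; b4] ->
         seteq (St' G) (L [:: P [:: pI]]))]]].
Proof.
move=> St' L P; rewrite {}/St' {}/L {}/P.
have lt1n : 1 < n by apply: leq_trans hn.
have St_a0 : seteq (St (circ a0 n)) _ := fun P => St_circ_a0 P lt1n.
have compat_IX G : G \in [:: b0; b1] ->
    forall a b, compat G a b = ~~ anticomm a pX && ~~ anticomm b pX.
  by rewrite !inE => /orP[] /eqP -> [] [].
have St_b0 : seteq (St (circ b0 n)) _ := fun P => St_circ_tens2_IX P lt1n (compat_IX b0 isT).
have St_b1 : seteq (St (circ b1 n)) _ := fun P => St_circ_tens2_IX P lt1n (compat_IX b1 isT).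
have words G ws := @St_circ_words G n ws hn.
have n_split : n = (n - 3) %/ 6 * 6 + ((n - 3) %% 6 + 3) by rewrite addnA -divn_eq subnK.
have oddE : odd n = odd ((n - 3) %% 6 + 3) by rewrite {1}n_split oddD oddM andbF.
have mod3E : n %% 3 = ((n - 3) %% 6 + 3) %% 3.
  by rewrite {1}n_split -[6]/(2 * 3) mulnA modnMDl.
move: words oddE mod3E (ltn_pmod (n - 3) (isT : 0 < 6)); move: ((n - 3) %% 6) => r.
by case: r => [|[|[|[|[|[|r]]]]]] words oddE mod3E // _; certify words oddE mod3E.
Qed.
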